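(* Let $\bm{\mu}\in X^{\mathcal{L}(\mathcal{T})}$. For every node $s\in S$: if $a_{s_0}(\bm{\mu})=$'win' then $d_s(\bm{\mu})>0\iff V_s(\bm{\mu})>\theta$; if $a_{s_0}(\bm{\mu})=$'lose' then $d_s(\bm{\mu})>0\iff V_s(\bm{\mu})<\theta$.
   Context: $\mathcal{T}$ is a finite rooted tree with node set $S$, root $s_0$, children $\mathcal{C}(s)$, leaves $\mathcal{L}(\mathcal{T})$; internal labels $L(s)\in\{\text{MAX},\text{MIN}\}$. $X\subseteq\mathbb{R}$ mean-parameter set of a one-parameter exponential family; $d(x,y)$ KL divergence between members with means $x,y$ (nonnegative, zero iff $x=y$); threshold $\theta\in X$. $V_s(\bm{\mu})=\mu_s$ at leaves, max/min of children's values at MAX/MIN nodes; $a_s(\bm{\mu})=$'win' iff $V_s(\bm{\mu})\ge\theta$. Define $d_s(\bm{\mu})$ bottom-up: let $a^*=a_{s_0}(\bm{\mu})$, $P=$MAX, $Q=$MIN if $a^*=$'win' and $P=$MIN, $Q=$MAX if 'lose'. Leaf $s$: $d_s=d(\mu_s,\theta)$ if ($a^*=$'win', $\mu_s\ge\theta$) or ($a^*=$'lose', $\mu_s<\theta$), else $0$. $L(s)=P$: $d_s=\max_{c\in\mathcal{C}(s)}d_c$. $L(s)=Q$: $d_s=(\sum_{c}1/d_c)^{-1}$ if $d_c>0$ for all $c\in\mathcal{C}(s)$, and $d_s=0$ otherwise. *)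

From Stdlib Require Import Reals List Bool.
Import ListNotations.
Open Scope R_scope.
Open Scope bool_scope.

Inductive label := MAX | MIN.

(* Finite rooted (ordered) trees: leaves carry an identifier of type Lf
   (the arm index), internal nodes carry a label and their list of children. *)
Inductive tree (Lf : Type) : Type :=
| Leaf : Lf -> tree Lf
| Node : label -> list (tree Lf) -> tree Lf.
Arguments Leaf {Lf} _.
Arguments Node {Lf} _ _.

(* [subtree s t] : s is a node of t (the subtree rooted at that node). *)
Inductive subtree {Lf : Type} : tree Lf -> tree Lf -> Prop :=
| sub_refl t : subtree t t
| sub_child s c k cs : In c cs -> subtree s c -> subtree s (Node k cs).

Definition well_formed {Lf : Type} (T : tree Lf) : Prop :=
  forall k cs, subtree (Node k cs) T -> cs <> [].

Fixpoint value {Lf : Type} (mu : Lf -> R) (t : tree Lf) : R :=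
  match t with
  | Leaf l => mu l
  | Node k cs =>
      let op := match k with MAX => Rmax | MIN => Rmin end in
      (fix go (cs : list (tree Lf)) : R :=
         match cs with
         | [] => 0
         | c :: cs' => match cs' with
                       | [] => value mu c
                       | _ => op (value mu c) (go cs')
                       end
         end) cs
  end.

Definition is_win {Lf : Type} (theta : R) (mu : Lf -> R) (T : tree Lf) : bool :=
  if Rle_dec theta (value mu T) then true else false.

(* d_s(mu), given the divergence d, threshold theta, and the root answer
   (win = true for 'win', false for 'lose').  P = MAX, Q = MIN if win;
   P = MIN, Q = MAX if lose. *)
Fixpoint dval {Lf : Type} (d : R -> R -> R) (theta : R) (mu : Lf -> R)
    (win : bool) (t : tree Lf) : R :=
  match t with
  | Leaf l =>
      if win then (if Rle_dec theta (mu l) then d (mu l) theta else 0)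
      else (if Rlt_dec (mu l) theta then d (mu l) theta else 0)
  | Node k cs =>
      let isP := match k, win with MAX, true | MIN, false => true | _, _ => false end in
      if isP then
        (fix go (cs : list (tree Lf)) : R :=
           match cs with
           | [] => 0
           | c :: cs' => match cs' with
                         | [] => dval d theta mu win c
                         | _ => Rmax (dval d theta mu win c) (go cs')
                         end
           end) cs
      else
        let allpos := (fix go (cs : list (tree Lf)) : bool :=
           match cs with
           | [] => true
           | c :: cs' => (if Rlt_dec 0 (dval d theta mu win c) then true else false)
                         && go cs'
           end) cs in
        let suminv := (fix go (cs : list (tree Lf)) : R :=
           match cs with
           | [] => 0
           | c :: cs' => / (dval d theta mu win c) + go cs'
           end) cs in
        if allpos then / suminv else 0
  end.

(* Whatever the root answer w, d_s > 0 exactly when V_s lies strictly on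
   w's side of theta, by induction on the tree.  At a leaf, d(mu, theta) > 0
   iff mu <> theta.  At a node of w's own type P, d_s is a maximum, positive iff
   some child is, and V_s (a max for 'win', a min for 'lose') is strictly on w's
   side iff some child's value is.  At a node of the opposing type Q, d_s is a
   harmonic sum, positive iff every child is, and V_s is strictly on w's side
   iff every child's value is. *)

From Stdlib Require Import Reals List Lra.
Import ListNotations.
Open Scope R_scope.

Section ListFolds.
Context {A : Type}.
Variables (g : A -> R) (op : R -> R -> R).

Fixpoint fold1 (cs : list A) : R :=
  match cs with
  | [] => 0
  | c :: cs' => match cs' with [] => g c | _ => op (g c) (fold1 cs') end
  end.

Fixpoint all_pos (cs : list A) : bool :=
  match cs with
  | [] => true
  | c :: cs' => (if Rlt_dec 0 (g c) then true else false) && all_pos cs'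
  end.

Fixpoint sum_inv (cs : list A) : R :=
  match cs with
  | [] => 0
  | c :: cs' => / g c + sum_inv cs'
  end.

Variable Q : R -> Prop.

Lemma fold1_exists :
  (forall x y, Q (op x y) <-> Q x \/ Q y) ->
  forall cs, cs <> [] -> (Q (fold1 cs) <-> exists c, In c cs /\ Q (g c)).
Proof.
  intros Hop cs; induction cs as [|c [|c' cs] IH]; intros Hne; [congruence| |].
  - simpl; split; [eauto | intros [x [[<-|[]] Hx]]; exact Hx].
  - change (Q (op (g c) (fold1 (c' :: cs))) <->
            exists x, In x (c :: c' :: cs) /\ Q (g x)).
    rewrite Hop, IH by discriminate; split.
    + intros [H|[x [Hx HQ]]]; [exists c | exists x]; simpl; auto.
    + intros [x [[<-|Hx] HQ]]; [left | right; exists x]; auto.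
Qed.

Lemma fold1_forall :
  (forall x y, Q (op x y) <-> Q x /\ Q y) ->
  forall cs, cs <> [] -> (Q (fold1 cs) <-> forall c, In c cs -> Q (g c)).
Proof.
  intros Hop cs; induction cs as [|c [|c' cs] IH]; intros Hne; [congruence| |].
  - simpl; split; [intros H x [<-|[]]; exact H | intros H; apply H; left; auto].
  - change (Q (op (g c) (fold1 (c' :: cs))) <->
            forall x, In x (c :: c' :: cs) -> Q (g x)).
    rewrite Hop, IH by discriminate; split.
    + intros [Hc Hcs] x [<-|Hx]; auto.
    + intros H; split; [apply H | intros x Hx; apply H]; simpl; auto.
Qed.

Lemma all_pos_spec cs : all_pos cs = true <-> forall c, In c cs -> 0 < g c.
Proof.
  induction cs as [|c cs IH]; simpl; [split; auto; intros _ _ []|].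
  destruct (Rlt_dec 0 (g c)) as [Hc|Hc]; simpl; rewrite ?IH; split.
  - intros H x [<-|Hx]; auto.
  - auto.
  - discriminate.
  - intros H; contradiction (Hc (H c (or_introl eq_refl))).
Qed.

Lemma sum_inv_gt0 cs :
  cs <> [] -> (forall c, In c cs -> 0 < g c) -> 0 < sum_inv cs.
Proof.
  intros Hne Hpos.
  assert (Hge0 : forall cs', (forall c, In c cs' -> 0 < g c) -> 0 <= sum_inv cs').
  { induction cs' as [|c cs' IH]; simpl; intros H; [lra|].
    pose proof (Rinv_0_lt_compat _ (H c (or_introl eq_refl))).
    pose proof (IH (fun x Hx => H x (or_intror Hx))); lra. }
  destruct cs as [|c cs]; [congruence|]; simpl.
  pose proof (Rinv_0_lt_compat _ (Hpos c (or_introl eq_refl))).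
  pose proof (Hge0 cs (fun x Hx => Hpos x (or_intror Hx))); lra.
Qed.

(* Needs [cs <> []]: for [cs = []] the junk value is [/ 0 = 0]. *)
Lemma harmonic_gt0 cs :
  cs <> [] ->
  0 < (if all_pos cs then / sum_inv cs else 0) <-> forall c, In c cs -> 0 < g c.
Proof.
  intros Hne; destruct (all_pos cs) eqn:E.
  - rewrite all_pos_spec in E; split; [auto | intros _].
    apply Rinv_0_lt_compat, sum_inv_gt0; auto.
  - split; [lra | intros H; apply all_pos_spec in H; congruence].
Qed.

End ListFolds.

Definition label_op (k : label) : R -> R -> R :=
  match k with MAX => Rmax | MIN => Rmin end.

Definition is_P (k : label) (w : bool) : bool :=
  match k, w with MAX, true | MIN, false => true | _, _ => false end.

Definition strict_side (w : bool) (theta v : R) : Prop :=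
  if w then theta < v else v < theta.

Definition some_or_all {A : Type} (b : bool) (P : A -> Prop) (cs : list A) : Prop :=
  if b then exists c, In c cs /\ P c else forall c, In c cs -> P c.

Lemma some_or_all_iff {A : Type} b (P P' : A -> Prop) cs :
  (forall c, In c cs -> (P c <-> P' c)) ->
  (some_or_all b P cs <-> some_or_all b P' cs).
Proof.
  intros H; destruct b; simpl; split.
  - intros [c [Hc HP]]; exists c; split; [|apply H]; auto.
  - intros [c [Hc HP]]; exists c; split; [|apply H]; auto.
  - intros HP c Hc; apply H; auto.
  - intros HP c Hc; apply H; auto.
Qed.

Lemma strict_side_label_op k w theta x y :
  strict_side w theta (label_op k x y) <->
  if is_P k w then strict_side w theta x \/ strict_side w theta y
  else strict_side w theta x /\ strict_side w theta y.
Proof.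
  destruct k, w; simpl; unfold Rmax, Rmin;
    destruct (Rle_dec x y); split; intuition lra.
Qed.

Lemma strict_side_fold1 {A : Type} (g : A -> R) k w theta cs :
  cs <> [] ->
  strict_side w theta (fold1 g (label_op k) cs) <->
  some_or_all (is_P k w) (fun c => strict_side w theta (g c)) cs.
Proof.
  intros Hne; pose proof (strict_side_label_op k w theta) as Hop.
  unfold some_or_all; destruct (is_P k w).
  - apply (fold1_exists g _ (strict_side w theta)); auto.
  - apply (fold1_forall g _ (strict_side w theta)); auto.
Qed.

Lemma Rmax_gt0 x y : 0 < Rmax x y <-> 0 < x \/ 0 < y.
Proof. unfold Rmax; destruct (Rle_dec x y); split; intuition lra. Qed.

Section Trees.
Context {Lf : Type}.

Fixpoint tree_nested_ind (P : tree Lf -> Prop) (HL : forall l, P (Leaf l))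
  (HN : forall k cs, (forall c, In c cs -> P c) -> P (Node k cs)) (t : tree Lf) : P t :=
  match t with
  | Leaf l => HL l
  | Node k cs =>
      HN k cs (proj1 (Forall_forall P cs)
        ((fix go (cs : list (tree Lf)) : Forall P cs :=
            match cs with
            | [] => Forall_nil _
            | c :: cs' => Forall_cons _ (tree_nested_ind P HL HN c) (go cs')
            end) cs))
  end.

Lemma subtree_trans (r s t : tree Lf) : subtree r s -> subtree s t -> subtree r t.
Proof. intros Hrs Hst; induction Hst; [exact Hrs | econstructor; eauto]. Qed.

Lemma well_formed_subtree (s t : tree Lf) : well_formed t -> subtree s t -> well_formed s.
Proof. intros Ht Hst k cs Hs; apply (Ht k); eapply subtree_trans; eauto. Qed.

End Trees.

Section Divergence.
Variables (Lf : Type) (X : R -> Prop) (d : R -> R -> R) (theta : R) (mu : Lf -> R).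
Hypothesis X_theta : X theta.
Hypothesis d_ge0 : forall x y, X x -> X y -> 0 <= d x y.
Hypothesis d_eq0 : forall x y, X x -> X y -> (d x y = 0 <-> x = y).

Lemma value_Node k cs : value mu (Node k cs) = fold1 (value mu) (label_op k) cs.
Proof. reflexivity. Qed.

Lemma dval_Node w k cs :
  dval d theta mu w (Node k cs) =
  if is_P k w then fold1 (dval d theta mu w) Rmax cs
  else if all_pos (dval d theta mu w) cs then / sum_inv (dval d theta mu w) cs
  else 0.
Proof. reflexivity. Qed.

Lemma d_gt0 x : X x -> 0 < d x theta <-> x <> theta.
Proof.
  intros Xx; pose proof (d_ge0 x theta Xx X_theta) as Hge0.
  rewrite <- (d_eq0 x theta Xx X_theta).
  split; [lra | intros Hne; destruct (Rle_lt_or_eq_dec _ _ Hge0); congruence].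
Qed.

Lemma dval_Leaf_gt0 w l :
  X (mu l) -> 0 < dval d theta mu w (Leaf l) <-> strict_side w theta (mu l).
Proof.
  intros Xl; pose proof (d_gt0 (mu l) Xl) as Hd; unfold strict_side; simpl.
  destruct w; [destruct (Rle_dec theta (mu l)) | destruct (Rlt_dec (mu l) theta)];
    rewrite ?Hd; split; intros; try lra.
Qed.

Lemma dval_Node_gt0 w k cs :
  cs <> [] ->
  0 < dval d theta mu w (Node k cs) <->
  some_or_all (is_P k w) (fun c => 0 < dval d theta mu w c) cs.
Proof.
  intros Hne; rewrite dval_Node; unfold some_or_all; destruct (is_P k w).
  - apply (fold1_exists _ _ (Rlt 0)); auto using Rmax_gt0.
  - apply harmonic_gt0; exact Hne.
Qed.

Lemma dval_gt0 w t :
  well_formed t -> (forall l, subtree (Leaf l) t -> X (mu l)) ->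
  0 < dval d theta mu w t <-> strict_side w theta (value mu t).
Proof.
  induction t as [l | k cs IH] using tree_nested_ind; intros Hwf HX.
  - apply dval_Leaf_gt0, HX, sub_refl.
  - assert (Hne : cs <> []) by (apply (Hwf k), sub_refl).
    assert (Hchild : forall c, In c cs -> subtree c (Node k cs))
      by (intros c Hc; eapply sub_child; eauto using sub_refl).
    rewrite dval_Node_gt0, value_Node, strict_side_fold1 by exact Hne.
    apply some_or_all_iff; intros c Hc; apply IH; [exact Hc | |].
    + eapply well_formed_subtree; eauto.
    + intros l Hl; apply HX; eapply subtree_trans; eauto.
Qed.

End Divergence.

Theorem proposition8 (Lf : Type) (T : tree Lf) (X : R -> Prop)
  (d : R -> R -> R) (theta : R) (mu : Lf -> R) :
  well_formed T ->
  X theta ->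
  (forall x y, X x -> X y -> 0 <= d x y) ->
  (forall x y, X x -> X y -> (d x y = 0 <-> x = y)) ->
  (forall l, subtree (Leaf l) T -> X (mu l)) ->
  forall s, subtree s T ->
    (is_win theta mu T = true ->
       (0 < dval d theta mu true s <-> theta < value mu s)) /\
    (is_win theta mu T = false ->
       (0 < dval d theta mu false s <-> value mu s < theta)).
Proof.
  intros Hwf Xtheta d_ge0 d_eq0 HX s Hs.
  assert (Hwf_s : well_formed s) by (eapply well_formed_subtree; eauto).
  assert (HX_s : forall l, subtree (Leaf l) s -> X (mu l))
    by (intros l Hl; apply HX; eapply subtree_trans; eauto).
  split; intros _; exact (dval_gt0 Lf X d theta mu Xtheta d_ge0 d_eq0 _ s Hwf_s HX_s).
Qed.
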